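(* Let $F$ be a field with $F=\mathbb Q$ or $F=\mathbb Z_p$ ($p$ prime), and let $A$ be a prime $F$-algebra generated as an $F$-algebra by two principally nilpotent elements $x,y$ such that $x+y$ is a minimal non-nilpotent element of $A$ and $xA+yA=\mathcal J(A)$ is the unique maximal right (and left) ideal of $A$. Then $A$ embeds (as a subring) into a countable prime von Neumann regular ring $R$ such that $J\cap A\neq 0$ for every non-zero ideal $J$ of $R$.
   Context: All rings are associative with unit; ''ideal'' means two-sided ideal. A ring $R$ is von Neumann regular (VNR) if for every $x\in R$ there is $y\in R$ with $x=xyx$. An element $a$ of a ring $A$ is principally nilpotent if every element of the right ideal $aA$ is nilpotent. An element $b$ of $A$ is minimal non-nilpotent if $b$ is not nilpotent and for every non-zero ideal $J$ of $A$ there is $n$ with $b^n\in J$. $\mathcal J(A)$ is the Jacobson radical. *)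

From HB Require Import structures.
From mathcomp Require Import all_boot all_order all_algebra.
Set Implicit Arguments. Unset Strict Implicit. Unset Printing Implicit Defensive.
Import Order.TTheory GRing.Theory Num.Theory.
Local Open Scope ring_scope.

(* Subsets of a ring are represented as Prop-valued predicates R -> Prop. *)

Section Defs.
Variable R : nzRingType.

Definition is_addsubgroup (I : R -> Prop) : Prop :=
  I 0 /\ (forall a b, I a -> I b -> I (a - b)).

Definition is_right_ideal (I : R -> Prop) : Prop :=
  is_addsubgroup I /\ (forall a r, I a -> I (a * r)).

Definition is_left_ideal (I : R -> Prop) : Prop :=
  is_addsubgroup I /\ (forall a r, I a -> I (r * a)).

Definition is_ideal (I : R -> Prop) : Prop :=
  is_right_ideal I /\ is_left_ideal I.

Definition nonzero_set (I : R -> Prop) : Prop := exists a, I a /\ a != 0.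

Definition proper_set (I : R -> Prop) : Prop := exists a, ~ I a.

Definition same_set (I J : R -> Prop) : Prop := forall a, I a <-> J a.

Definition subset_of (I J : R -> Prop) : Prop := forall a, I a -> J a.

Definition is_max_right_ideal (M : R -> Prop) : Prop :=
  [/\ is_right_ideal M, proper_set M &
      forall N, is_right_ideal N -> subset_of M N -> proper_set N ->
        same_set N M].

Definition is_max_left_ideal (M : R -> Prop) : Prop :=
  [/\ is_left_ideal M, proper_set M &
      forall N, is_left_ideal N -> subset_of M N -> proper_set N ->
        same_set N M].

Definition jacobson (a : R) : Prop :=
  forall M, is_max_right_ideal M -> M a.

Definition prime_ring : Prop :=
  forall I J : R -> Prop, is_ideal I -> is_ideal J ->
    (forall i j, I i -> J j -> i * j = 0) ->
    (forall i, I i -> i = 0) \/ (forall j, J j -> j = 0).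

Definition vnr : Prop := forall x : R, exists y, x = x * y * x.

Definition nilpotent (a : R) : Prop := exists n, a ^+ n = 0.

Definition principally_nilpotent (a : R) : Prop :=
  forall r : R, nilpotent (a * r).

Definition minimal_non_nilpotent (b : R) : Prop :=
  ~ nilpotent b /\
  forall J, is_ideal J -> nonzero_set J -> exists n, J (b ^+ n).

Definition countable_type (T : Type) : Prop :=
  exists g : T -> nat, injective g.

Definition sum_right_ideal (x y : R) (a : R) : Prop :=
  exists r s, a = x * r + y * s.
End Defs.

Definition Q_or_Zp (F : fieldType) : Prop :=
  (exists f : {rmorphism rat -> F}, bijective f) \/
  (exists p : nat, prime p /\ exists f : {rmorphism 'F_p -> F}, bijective f).

Definition generated_by2 (F : fieldType) (A : algType F) (x y : A) : Prop :=
  forall S : {pred A}, subalg_closed S -> x \in S -> y \in S ->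
    forall a : A, a \in S.

(* Left multiplication embeds A into the ring E of F-linear endomorphisms of A,
   and E is von Neumann regular: by Zorn's lemma applied to graphs of partial
   linear maps, every f has a g with f g f = f.  The subring S of E generated
   by x, y and the scalars and closed under a chosen such g is countable, since
   F is, and regular.  Again by Zorn, S has an ideal M maximal among those
   meeting A only in 0; then R := S / M is countable and regular, contains A,
   and every nonzero ideal of R meets A by maximality of M.  Primeness of R
   follows: if I J = 0 for nonzero ideals, pick nonzero a, b in A with a in I,
   b in J; then a A b = 0, contradicting primeness of A. *)

From HB Require Import structures.
From mathcomp Require Import all_boot all_order all_algebra.
From mathcomp Require Import boolp classical_sets.
Set Implicit Arguments. Unset Strict Implicit. Unset Printing Implicit Defensive.
Import GRing.Theory.
Local Open Scope classical_set_scope.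
Local Open Scope ring_scope.

Lemma Zorn_bigcup_nonempty (T : Type) (P : set (set T)) :
  P !=set0 ->
  (forall F : set (set T), F `<=` P -> F !=set0 -> total_on F subset ->
     P (\bigcup_(X in F) X)) ->
  exists M, P M /\ forall B, M `<` B -> ~ P B.
Proof.
(* Enlarging every set by a fixed member X0 of P makes the empty chain harmless. *)
move=> [X0 PX0] Pchain; pose P' X := P (X0 `|` X).
have [A [P'A maxA]] : exists A, P' A /\ forall B, A `<` B -> ~ P' B.
  apply: Zorn_bigcup => F FP' Ftot; rewrite /P'.
  have [[X FX]|/nonemptyPn->] := pselect (F !=set0); last first.
    by rewrite bigcup_set0 setU0.
  have -> : X0 `|` \bigcup_(Y in F) Y = \bigcup_(Z in (setU X0) @` F) Z.
    apply/seteqP; split=> [t [X0t|[Y FY Yt]]|t [_ [Y FY <-] [X0t|Yt]]].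
    - by exists (X0 `|` X); [exists X | left].
    - by exists (X0 `|` Y); [exists Y | right].
    - by left.
    - by right; exists Y.
  apply: Pchain; first by move=> _ [Y FY <-]; exact: FP'.
    by exists (X0 `|` X), X.
  move=> _ _ [Y FY <-] [Z FZ <-].
  by have [YZ|ZY] := Ftot _ _ FY FZ; [left|right]; exact: setUS.
exists (X0 `|` A); split => [//|B [AB BA] PB].
apply: (maxA B); last by rewrite /P' setUidr // => t X0t; apply/AB; left.
by split=> [t At|BA']; [apply/AB; right | apply/BA => t Bt; right; exact: BA'].
Qed.

Section Endomorphisms.
Variables (R : pzRingType) (V : lmodType R).

Record endo := Endo { endo_fun :> V -> V; endo_linear : linear endo_fun }.

HB.instance Definition _ (f : endo) :=
  GRing.isLinear.Build R V V *:%R (endo_fun f) (endo_linear f).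
HB.instance Definition _ := gen_eqMixin endo.
HB.instance Definition _ := gen_choiceMixin endo.

Lemma endoP (f g : endo) : f =1 g -> f = g.
Proof.
case: f g => [f lf] [g lg] /= /funext fg; subst g.
by congr Endo; exact: Prop_irrelevance.
Qed.

Definition endo_zero := Endo (linearP (\0 : V -> V)).
Definition endo_one := Endo (linearP (@idfun V)).
Definition endo_add (f g : endo) := Endo (linearP (f \+ g)).
Definition endo_opp (f : endo) := Endo (linearP (\- f)).
Definition endo_mul (f g : endo) := Endo (linearP (f \o g)).

Lemma endo_addA : associative endo_add.
Proof. by move=> f g h; apply: endoP => v /=; rewrite addrA. Qed.
Lemma endo_addC : commutative endo_add.
Proof. by move=> f g; apply: endoP => v /=; rewrite addrC. Qed.
Lemma endo_add0 : left_id endo_zero endo_add.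
Proof. by move=> f; apply: endoP => v /=; rewrite add0r. Qed.
Lemma endo_addN : left_inverse endo_zero endo_opp endo_add.
Proof. by move=> f; apply: endoP => v /=; rewrite addNr. Qed.

HB.instance Definition _ :=
  GRing.isZmodule.Build endo endo_addA endo_addC endo_add0 endo_addN.

Lemma endo_mulA : associative endo_mul. Proof. by move=> *; apply: endoP. Qed.
Lemma endo_mul1 : left_id endo_one endo_mul. Proof. by move=> *; apply: endoP. Qed.
Lemma endo_mulr1 : right_id endo_one endo_mul. Proof. by move=> *; apply: endoP. Qed.
Lemma endo_mulDl : left_distributive endo_mul endo_add.
Proof. by move=> *; apply: endoP. Qed.
Lemma endo_mulDr : right_distributive endo_mul endo_add.
Proof. by move=> f g h; apply: endoP => v /=; rewrite linearD. Qed.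

HB.instance Definition _ := GRing.Zmodule_isPzRing.Build endo
  endo_mulA endo_mul1 endo_mulr1 endo_mulDl endo_mulDr.

End Endomorphisms.

Section PseudoInverse.
Variables (F : fieldType) (V : lmodType F) (f : endo V).

(* Graphs of partial linear maps g with f (g u) = u on the range of f. *)
Definition pinv_graph (G : set (V * V)) :=
  [/\ G (0, 0),
      forall u v v', G (u, v) -> G (u, v') -> v = v',
      forall c u1 v1 u2 v2, G (u1, v1) -> G (u2, v2) ->
        G (c *: u1 + u2, c *: v1 + v2) &
      forall u v b, G (u, v) -> f b = u -> f v = u].

Lemma pinv_graph_bigcup (Gs : set (set (V * V))) :
  Gs `<=` pinv_graph -> Gs !=set0 -> total_on Gs subset ->
  pinv_graph (\bigcup_(G in Gs) G).
Proof.
move=> GsP [G0 GsG0] Gtot.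
have common G1 G2 : Gs G1 -> Gs G2 -> exists2 G, Gs G & G1 `<=` G /\ G2 `<=` G.
  move=> GsG1 GsG2; have [G12|G21] := Gtot G1 G2 GsG1 GsG2.
    by exists G2 => //; split.
  by exists G1 => //; split.
split.
- by exists G0 => //; have [] := GsP _ GsG0.
- move=> u v v' [G1 GsG1 G1u] [G2 GsG2 G2u].
  have [G GsG [G1G G2G]] := common G1 G2 GsG1 GsG2.
  by have [_ fun_G _ _] := GsP G GsG; apply: (fun_G u); [exact: G1G | exact: G2G].
- move=> c u1 v1 u2 v2 [G1 GsG1 G1u] [G2 GsG2 G2u].
  have [G GsG [G1G G2G]] := common G1 G2 GsG1 GsG2; exists G => //.
  by have [_ _ lin_G _] := GsP G GsG; apply: lin_G; [exact: G1G | exact: G2G].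
- by move=> u v b [G GsG Gu]; have [_ _ _ inv_G] := GsP G GsG; exact: inv_G.
Qed.

Section Extension.
Variables (G : set (V * V)) (a : V).
Hypotheses (G_pinv : pinv_graph G) (a_notin : forall v, ~ G (a, v)).

(* z := b0 - v0 for some (u0, v0) in G with a + u0 = f b0, if there is one. *)
Lemma pinv_graph_value :
  exists z, forall u v b, G (u, v) -> f b = a + u -> f (z + v) = a + u.
Proof.
have [_ _ lin_G inv_G] := G_pinv.
have [[u0 [v0 [b0 [G0 fb0]]]]|none] :=
  pselect (exists u0 v0 b0, G (u0, v0) /\ f b0 = a + u0); last first.
  by exists 0 => u v b Guv fb; case: none; exists u, v, b.
exists (b0 - v0) => u v b Guv fb.
have Gd : G (u - u0, v - v0).
  by have := lin_G (-1) _ _ _ _ G0 Guv; rewrite !scaleN1r ![- _ + _]addrC.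
have fd : f (v - v0) = u - u0.
  apply: (inv_G _ _ (b - b0) Gd).
  by rewrite linearB /= fb fb0 opprD addrACA subrr add0r.
by rewrite -addrA [- v0 + v]addrC linearD /= fd fb0 [u - u0]addrC addrA addrK.
Qed.

Lemma pinv_graph_extend : exists2 G', pinv_graph G' & G `<` G'.
Proof.
have [G00 fun_G lin_G inv_G] := G_pinv.
have scale_G c u v : G (u, v) -> G (c *: u, c *: v).
  by move=> Guv; have := lin_G c _ _ _ _ Guv G00; rewrite !addr0.
have [z hz] := pinv_graph_value.
pose G' w := exists u v (m : F), G (u, v) /\ w = (u + m *: a, v + m *: z).
have G'_G u v : G (u, v) -> G' (u, v).
  by move=> Guv; exists u, v, 0; rewrite !scale0r !addr0.
exists G'; last first.
  split=> [[u v] /G'_G //|G'G].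
  have G'az : G' (a, z) by exists 0, 0, 1; rewrite !scale1r !add0r.
  exact: a_notin z (G'G _ G'az).
split.
- exact: G'_G.
- move=> _ _ _ [u1 [v1 [m1 [G1 [-> ->]]]]] [u2 [v2 [m2 [G2 [eu ->]]]]].
  have [em|m12] := eqVneq m1 m2.
    subst m2; move: G2; rewrite -(addIr _ eu) => G2.
    by rewrite (fun_G _ _ _ G1 G2).
  have eua : (m1 - m2)^-1 *: (u2 - u1) = a.
    have -> : u2 - u1 = (m1 - m2) *: a.
      apply: (addIr (m2 *: a)); rewrite scalerBl addrNK addrAC -eu.
      by rewrite addrAC subrr add0r.
    by rewrite scalerA mulVf ?scale1r // subr_eq0.
  have := lin_G (m1 - m2)^-1 _ _ _ _ (lin_G (-1) _ _ _ _ G1 G2) G00.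
  by rewrite !scaleN1r addr0 [- u1 + _]addrC eua => /a_notin.
- move=> c _ _ _ _ [u1 [v1 [m1 [G1 [-> ->]]]]] [u2 [v2 [m2 [G2 [-> ->]]]]].
  exists (c *: u1 + u2), (c *: v1 + v2), (c * m1 + m2); split; first exact: lin_G.
  by congr pair; rewrite !scalerDr !scalerDl !scalerA addrACA.
- move=> _ _ b [u [v [m [Guv [-> ->]]]]].
  have [->|m_neq0] := eqVneq m 0; first by rewrite !scale0r !addr0; exact: inv_G.
  move=> fb; have := hz _ _ (m^-1 *: b) (scale_G m^-1 _ _ Guv).
  rewrite linearZ /= fb scalerDr scalerA mulVf // scale1r addrC => /(_ erefl) fz.
  have -> : v + m *: z = m *: (z + m^-1 *: v).
    by rewrite scalerDr scalerA mulfV // scale1r addrC.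
  by rewrite linearZ /= fz scalerDr scalerA mulfV // scale1r addrC.
Qed.

End Extension.

Lemma endo_regular : exists g : endo V, f * g * f = f.
Proof.
have [|G [G_pinv maxG]] := Zorn_bigcup_nonempty _ pinv_graph_bigcup.
  exists [set (0, 0)]; split=> [//|u v v' [_ ->] [_ ->] //| |].
    by move=> c u1 v1 u2 v2 [-> ->] [-> ->]; rewrite scaler0 addr0.
  by move=> u v b [-> ->]; rewrite linear0.
have G_total a : exists v, G (a, v).
  apply: contrapT => /forallNP a_notin.
  have [G' G'_pinv GG'] := pinv_graph_extend G_pinv a_notin.
  exact: maxG GG' G'_pinv.
have [_ fun_G lin_G inv_G] := G_pinv.
have [g Gg] := choice G_total.
have g_linear : linear g.
  by move=> c u v; apply: (fun_G (c *: u + v)); [exact: Gg | exact: lin_G].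
exists (Endo g_linear); apply: endoP => a /=.
by apply: (inv_G _ _ a); [exact: Gg | ].
Qed.

End PseudoInverse.

Section LeftMultiplication.
Variables (F : fieldType) (A : algType F).

Lemma endo_oner_neq0 : (1 : endo A) != 0.
Proof. by apply/eqP => /(congr1 (fun g : endo A => g 1)) /eqP; rewrite oner_eq0. Qed.

HB.instance Definition _ := GRing.PzSemiRing_isNonZero.Build (endo A) endo_oner_neq0.

Lemma mulr_linear (a : A) : linear ( *%R a).
Proof. by move=> c u v; rewrite mulrDr scalerAr. Qed.

Definition lmul (a : A) : endo A := Endo (mulr_linear a).

Lemma lmul_is_zmod_morphism : zmod_morphism lmul.
Proof. by move=> a b; apply: endoP => u /=; rewrite mulrBl. Qed.

Lemma lmul_is_monoid_morphism : monoid_morphism lmul.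
Proof. by split=> [|a b]; apply: endoP => u /=; rewrite ?mul1r ?mulrA. Qed.

HB.instance Definition _ := GRing.isZmodMorphism.Build A (endo A) lmul
  lmul_is_zmod_morphism.
HB.instance Definition _ := GRing.isMonoidMorphism.Build A (endo A) lmul
  lmul_is_monoid_morphism.

Lemma lmul_inj : injective lmul.
Proof. by move=> a b /(congr1 (fun g : endo A => g 1)) /=; rewrite !mulr1. Qed.

Lemma lmulZ (c : F) (a : A) : lmul (c *: a) = lmul c%:A * lmul a.
Proof. by rewrite -rmorphM mulr_algl. Qed.

End LeftMultiplication.

Section VnrHull.
Variables (Q : nzRingType) (G : Type) (gen : G -> Q) (pinv : Q -> Q).
Hypothesis pinvP : forall q, q * pinv q * q = q.

Inductive vterm :=
  VGen of G | VOne | VSub of vterm & vterm | VMul of vterm & vterm | VPinv of vterm.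

Fixpoint veval (t : vterm) : Q :=
  match t with
  | VGen g => gen g
  | VOne => 1
  | VSub t1 t2 => veval t1 - veval t2
  | VMul t1 t2 => veval t1 * veval t2
  | VPinv t1 => pinv (veval t1)
  end.

Definition vnr_hull_pred : {pred Q} := [pred q | `[< exists t, veval t = q >]].

Lemma vnr_hull_predP q : reflect (exists t, veval t = q) (q \in vnr_hull_pred).
Proof. exact: asboolP. Qed.

Lemma vnr_hull_subring_closed : subring_closed vnr_hull_pred.
Proof.
split; first by apply/vnr_hull_predP; exists VOne.
- move=> _ _ /vnr_hull_predP[t1 <-] /vnr_hull_predP[t2 <-].
  by apply/vnr_hull_predP; exists (VSub t1 t2).
- move=> _ _ /vnr_hull_predP[t1 <-] /vnr_hull_predP[t2 <-].
  by apply/vnr_hull_predP; exists (VMul t1 t2).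
Qed.

HB.instance Definition _ := GRing.isSubringClosed.Build Q vnr_hull_pred
  vnr_hull_subring_closed.

Inductive vnr_hull := VnrHull q of q \in vnr_hull_pred.

Definition hull_val (h : vnr_hull) : Q := let: VnrHull q _ := h in q.

HB.instance Definition _ := [isSub of vnr_hull for hull_val].
HB.instance Definition _ := [Choice of vnr_hull by <:].
HB.instance Definition _ := [SubChoice_isSubNzRing of vnr_hull by <:].

Lemma hull_gen g : gen g \in vnr_hull_pred.
Proof. by apply/vnr_hull_predP; exists (VGen g). Qed.

Lemma vnr_hull_vnr : vnr vnr_hull.
Proof.
move=> h; have /vnr_hull_predP[t et] := valP h.
have pinv_in : pinv (val h) \in vnr_hull_pred.
  by apply/vnr_hull_predP; exists (VPinv t); rewrite /= et.
by exists (Sub (pinv (val h)) pinv_in); apply: val_inj; rewrite !rmorphM /= pinvP.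
Qed.

Lemma vterm_tree_embedding (code : G -> nat) : injective code ->
  exists enc : vterm -> GenTree.tree nat, injective enc.
Proof.
move=> code_inj.
pose fix enc t := match t with
  | VGen g => GenTree.Leaf (code g)
  | VOne => GenTree.Node 0 [::]
  | VSub t1 t2 => GenTree.Node 1 [:: enc t1; enc t2]
  | VMul t1 t2 => GenTree.Node 2 [:: enc t1; enc t2]
  | VPinv t1 => GenTree.Node 3 [:: enc t1]
  end.
exists enc; elim=> [g||t1 IH1 t2 IH2|t1 IH1 t2 IH2|t1 IH1]
  [g'||t1' t2'|t1' t2'|t1'] //= [].
- by move=> /code_inj ->.
- by move=> /IH1 -> /IH2 ->.
- by move=> /IH1 -> /IH2 ->.
- by move=> /IH1 ->.
Qed.

Lemma vnr_hull_countable : countable_type G -> countable_type vnr_hull.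
Proof.
move=> [code /vterm_tree_embedding [enc enc_inj]].
have term_of h : {t | veval t = hull_val h}.
  by apply: cid; apply/vnr_hull_predP; case: h.
exists (fun h => pickle (enc (sval (term_of h)))) => h1 h2.
move=> /(pcan_inj pickleK_inv) /enc_inj e; apply: val_inj => /=.
by rewrite -(svalP (term_of h1)) -(svalP (term_of h2)) e.
Qed.

End VnrHull.

Section TwoSidedQuotient.
Local Open Scope quotient_scope.
Variables (R : nzRingType) (I : idealr R).
Hypothesis idealrM : forall a u, u \in I -> u * a \in I.

(* The right-closure proof is a parameter so that the ring structure below is
   canonical. *)
Definition twosided_quot of (forall a u, u \in I -> u * a \in I) := {ideal_quot I}.
Local Notation Rq := (twosided_quot idealrM).

HB.instance Definition _ := GRing.Zmodule.on Rq.

Definition tquot_pi (r : R) : Rq := \pi_{ideal_quot I} r.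
Definition tquot_mul (a b : Rq) : Rq := tquot_pi (repr a * repr b).

Lemma tquot_piE u v : (tquot_pi u = tquot_pi v) <-> (u - v \in I).
Proof. by rewrite Quotient.idealrBE; split => /eqP. Qed.

Lemma tquot_piP (a : Rq) : exists r, a = tquot_pi r.
Proof. by exists (repr a); rewrite /tquot_pi reprK. Qed.

Lemma tquot_pi_is_zmod_morphism : zmod_morphism tquot_pi.
Proof. by move=> u v; rewrite /tquot_pi !piE. Qed.

HB.instance Definition _ := GRing.isZmodMorphism.Build R Rq tquot_pi
  tquot_pi_is_zmod_morphism.

Lemma tquot_pi_mul u v : tquot_pi (u * v) = tquot_mul (tquot_pi u) (tquot_pi v).
Proof.
have repr_pi w : w - repr (tquot_pi w) \in I.
  by apply/tquot_piE; rewrite /tquot_pi reprK.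
apply/tquot_piE; set u' := repr _; set v' := repr _.
have -> : u * v - u' * v' = (u - u') * v + u' * (v - v').
  by rewrite mulrBl mulrBr addrA addrNK.
by rewrite rpredD ?(idealrM _ (repr_pi u)) ?(idealMr _ (repr_pi v)).
Qed.

Lemma tquot_mulA : associative tquot_mul.
Proof.
move=> a b c.
case: (tquot_piP a) => u ->; case: (tquot_piP b) => v ->; case: (tquot_piP c) => w ->.
by rewrite -!tquot_pi_mul mulrA.
Qed.
Lemma tquot_mul1 : left_id (tquot_pi 1) tquot_mul.
Proof. by move=> a; have [u ->] := tquot_piP a; rewrite -tquot_pi_mul mul1r. Qed.
Lemma tquot_mulr1 : right_id (tquot_pi 1) tquot_mul.
Proof. by move=> a; have [u ->] := tquot_piP a; rewrite -tquot_pi_mul mulr1. Qed.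
Lemma tquot_mulDl : left_distributive tquot_mul +%R.
Proof.
move=> a b c.
case: (tquot_piP a) => u ->; case: (tquot_piP b) => v ->; case: (tquot_piP c) => w ->.
by rewrite -raddfD -!tquot_pi_mul mulrDl raddfD.
Qed.
Lemma tquot_mulDr : right_distributive tquot_mul +%R.
Proof.
move=> a b c.
case: (tquot_piP a) => u ->; case: (tquot_piP b) => v ->; case: (tquot_piP c) => w ->.
by rewrite -raddfD -!tquot_pi_mul mulrDr raddfD.
Qed.
Lemma tquot_one_neq0 : tquot_pi 1 != 0.
Proof.
by rewrite -(raddf0 tquot_pi); apply/eqP => /tquot_piE; rewrite subr0 idealr1.
Qed.

HB.instance Definition _ := GRing.Zmodule_isNzRing.Build Rq
  tquot_mulA tquot_mul1 tquot_mulr1 tquot_mulDl tquot_mulDr tquot_one_neq0.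

Lemma tquot_pi_is_monoid_morphism : monoid_morphism tquot_pi.
Proof. by split=> // u v; rewrite tquot_pi_mul. Qed.

HB.instance Definition _ := GRing.isMonoidMorphism.Build R Rq tquot_pi
  tquot_pi_is_monoid_morphism.

End TwoSidedQuotient.

Lemma is_ideal_bigcup (R : nzRingType) (Js : set (set R)) :
  Js `<=` @is_ideal R -> Js !=set0 -> total_on Js subset ->
  is_ideal (\bigcup_(J in Js) J).
Proof.
move=> JsI [J0 JsJ0] Jtot; pose U := \bigcup_(J in Js) J.
have U_mul (op : R -> R -> R) :
    (forall J, is_ideal J -> forall a r, J a -> J (op a r)) ->
    forall a r, U a -> U (op a r).
  move=> op_closed a r [J JsJ Ja].
  by exists J => //; exact: op_closed (JsI J JsJ) _ _ Ja.
have U_sub : is_addsubgroup U.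
  split; first by exists J0 => //; have [[[]]] := JsI J0 JsJ0.
  move=> a b [J1 JsJ1 J1a] [J2 JsJ2 J2b].
  have [J12|J21] := Jtot J1 J2 JsJ1 JsJ2.
    by exists J2 => //; have [[[_ J2sub] _] _] := JsI J2 JsJ2; exact/J2sub/J2b/J12.
  by exists J1 => //; have [[[_ J1sub] _] _] := JsI J1 JsJ1; exact/J1sub/J21.
by split; split=> //; apply: U_mul => J [[_ ?] [_ ?]].
Qed.

Section EssentialQuotient.
Variables (A S : nzRingType) (emb : {rmorphism A -> S}).

Definition avoids_image (J : set S) := is_ideal J /\ forall a, J (emb a) -> a = 0.

Lemma avoids_image_bigcup (Js : set (set S)) :
  Js `<=` avoids_image -> Js !=set0 -> total_on Js subset ->
  avoids_image (\bigcup_(J in Js) J).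
Proof.
move=> JsA Js0 Jtot; split; first by apply: is_ideal_bigcup => // J /JsA[].
by move=> a [J /JsA[_ J_avoids] /J_avoids].
Qed.

Variable M : set S.
Hypotheses (M_avoids : avoids_image M) (M_max : forall B, M `<` B -> ~ avoids_image B).

Definition ideal_pred : {pred S} := [pred s | `[< M s >]].

Lemma ideal_predP s : reflect (M s) (s \in ideal_pred).
Proof. exact: asboolP. Qed.

Lemma ideal_pred_idealr_closed : idealr_closed ideal_pred.
Proof.
have [[[[M0 Msub] Mr] [_ Ml]] M_emb] := M_avoids.
split; first exact/ideal_predP.
  apply/ideal_predP => M1; have := M_emb 1.
  by rewrite rmorph1 => /(_ M1) /eqP; rewrite oner_eq0.
move=> a u v /ideal_predP Mu /ideal_predP Mv; apply/ideal_predP.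
by rewrite -[v]opprK -(sub0r v); apply: (Msub); [exact: Ml | exact: Msub].
Qed.

HB.instance Definition _ := isIdealr.Build S ideal_pred ideal_pred_idealr_closed.

Lemma ideal_pred_mulr a u : u \in ideal_pred -> u * a \in ideal_pred.
Proof.
have [[[_ Mr] _] _] := M_avoids.
by move=> /ideal_predP Mu; apply/ideal_predP; exact: Mr.
Qed.

Definition essential_quot := twosided_quot ideal_pred_mulr.
Definition essential_emb : {rmorphism A -> essential_quot} := tquot_pi _ \o emb.


Lemma essential_quotP s t :
  (tquot_pi ideal_pred_mulr s = tquot_pi ideal_pred_mulr t) <-> M (s - t).
Proof. by rewrite tquot_piE; split => /ideal_predP. Qed.

Lemma essential_emb_inj : injective essential_emb.
Proof.
move=> a b /essential_quotP; rewrite -rmorphB => /M_avoids.2 /eqP.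
by rewrite subr_eq0 => /eqP.
Qed.

Lemma essential_quot_meets (J : set essential_quot) :
  is_ideal J -> nonzero_set J -> exists a, a != 0 /\ J (essential_emb a).
Proof.
move=> [[[J0 Jsub] Jr] [_ Jl]] [j [Jj j_neq0]].
apply: contrapT => /forallNP no_meet.
pose X s := J (tquot_pi ideal_pred_mulr s).
have MX : M `<=` X.
  move=> s Ms; rewrite /X (_ : tquot_pi _ s = tquot_pi _ 0); first by rewrite raddf0.
  by apply/essential_quotP; rewrite subr0.
have X_avoids : avoids_image X.
  split; last first.
    move=> a Xa; apply: contrapT => /eqP a_neq0.
    by apply: (no_meet a); split.
  have X_sub : is_addsubgroup X.
    by split=> [|s t Xs Xt]; rewrite /X ?raddf0 ?raddfB //; exact: Jsub.
  by split; split=> // s r Xs; rewrite /X rmorphM; [exact: Jr | exact: Jl].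
have XM : X `<=` M by apply: contrapT => XM; exact: M_max (conj MX XM) X_avoids.
move: Jj j_neq0; have [s -> /XM Ms] := tquot_piP j; rewrite -(raddf0 (tquot_pi _)).
by move=> /eqP; apply; apply/essential_quotP; rewrite subr0.
Qed.

Lemma essential_quot_vnr : vnr S -> vnr essential_quot.
Proof.
move=> S_vnr q; have [s ->] := tquot_piP q; have [t st] := S_vnr s.
by exists (tquot_pi _ t); rewrite {1}st !rmorphM.
Qed.

Lemma essential_quot_countable : countable_type S -> countable_type essential_quot.
Proof.
move=> [g g_inj]; exists (fun q : essential_quot => g (repr q)) => q1 q2.
by move=> /g_inj e; rewrite -[q1]reprK -[q2]reprK e.
Qed.

End EssentialQuotient.

Lemma prime_ring_mul_eq0 (A : nzRingType) (a b : A) :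
  prime_ring A -> (forall c, a * c * b = 0) -> a = 0 \/ b = 0.
Proof.
(* Apply primeness to the ideals J := {v | a A v = 0} and I := {u | u A J = 0}. *)
move=> A_prime aAb.
pose J v := forall c, a * c * v = 0.
pose I u := forall c v, J v -> u * c * v = 0.
have I_ideal : is_ideal I.
  have I_sub : is_addsubgroup I.
    split=> [c v _|u1 u2 Iu1 Iu2 c v Jv]; first by rewrite !mul0r.
    by rewrite !mulrBl Iu1 ?Iu2 ?subrr.
  split; split=> // u r Iu c v Jv; first by rewrite -(mulrA u r c) Iu.
  by rewrite -(mulrA r u c) -(mulrA r) Iu ?mulr0.
have J_ideal : is_ideal J.
  have J_sub : is_addsubgroup J.
    split=> [c|v1 v2 Jv1 Jv2 c]; first by rewrite mulr0.
    by rewrite mulrBr Jv1 Jv2 subrr.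
  split; split=> // v r Jv c; first by rewrite mulrA Jv mul0r.
  by rewrite mulrA -(mulrA a) Jv.
have IJ u v : I u -> J v -> u * v = 0 by move=> Iu Jv; rewrite -[u]mulr1 Iu.
case: (A_prime I J I_ideal J_ideal IJ) => [I0|J0]; [left|right].
  by apply: I0 => c v; apply.
exact: J0.
Qed.

Lemma prime_ring_essential (A R : nzRingType) (f : {rmorphism A -> R}) :
  injective f ->
  (forall J, is_ideal J -> nonzero_set J -> exists a, a != 0 /\ J (f a)) ->
  prime_ring A -> prime_ring R.
Proof.
move=> f_inj f_meets A_prime I J I_ideal J_ideal IJ.
have meet (K : set R) : is_ideal K -> ~ (forall k, K k -> k = 0) ->
    exists a, a != 0 /\ K (f a).
  move=> K_ideal K_neq0; apply: f_meets => //; apply: contrapT => K0.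
  by apply: K_neq0 => k Kk; apply: contrapT => /eqP k_neq0; apply: K0; exists k.
have [I0|/(meet _ I_ideal)[a [a_neq0 Ia]]] := pselect (forall i, I i -> i = 0).
  by left.
right; apply: contrapT => /(meet _ J_ideal)[b [b_neq0 Jb]].
have [[_ Ir] _] := I_ideal.
have aAb c : a * c * b = 0.
  by apply: f_inj; rewrite !rmorphM rmorph0 IJ //; exact: Ir.
by case: (prime_ring_mul_eq0 A_prime aAb) => ab0; [move: a_neq0 | move: b_neq0];
  rewrite ab0 eqxx.
Qed.

Lemma essential_extension (A S : nzRingType) (emb : {rmorphism A -> S}) :
  injective emb -> countable_type S -> vnr S -> prime_ring A ->
  exists (R : nzRingType) (f : {rmorphism A -> R}),
    [/\ countable_type R, prime_ring R, vnr R, injective f &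
        forall J : R -> Prop, is_ideal J -> nonzero_set J ->
          exists a : A, a != 0 /\ J (f a)].
Proof.
move=> emb_inj S_countable S_vnr A_prime.
have zero_avoids : avoids_image emb [set 0].
  split=> [|a]; last by rewrite -(rmorph0 emb) => /emb_inj.
  have zero_sub : is_addsubgroup [set 0 : S] by split=> // _ _ -> ->; rewrite subr0.
  by split; split=> // _ r ->; rewrite ?mul0r ?mulr0.
have [|M [M_avoids M_max]] := Zorn_bigcup_nonempty _ (@avoids_image_bigcup _ _ emb).
  by exists [set 0].
exists (essential_quot M_avoids), (essential_emb M_avoids); split.
- exact: essential_quot_countable.
- apply: prime_ring_essential A_prime; first exact: essential_emb_inj.
  exact: essential_quot_meets.
- exact: essential_quot_vnr.
- exact: essential_emb_inj.
- exact: essential_quot_meets.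
Qed.

Lemma Q_or_Zp_countable (F : fieldType) : Q_or_Zp F -> countable_type F.
Proof.
case=> [[f [g _ fgK]]|[p [_ [f [g _ fgK]]]]];
  by exists (fun c => pickle (g c)) => c d /(pcan_inj pickleK_inv) /(can_inj fgK).
Qed.

Section HullEmbedding.
Variables (F : fieldType) (A : algType F) (x y : A).
Hypothesis gen_xy : generated_by2 x y.

Definition endo_pinv (f : endo A) : endo A := sval (cid (endo_regular f)).

Lemma endo_pinvP f : f * endo_pinv f * f = f.
Proof. exact: svalP (cid (endo_regular f)). Qed.

Definition lmul_gen (g : bool + F) : endo A :=
  match g with inl b => lmul (if b then x else y) | inr c => lmul c%:A end.

Local Notation hull := (vnr_hull lmul_gen endo_pinv).

Lemma lmul_in_hull a : lmul a \in vnr_hull_pred lmul_gen endo_pinv.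
Proof.
pose S : {pred A} := [pred a | lmul a \in vnr_hull_pred lmul_gen endo_pinv].
have S_subalg : subalg_closed S.
  have memS u : (u \in S) = (lmul u \in vnr_hull_pred lmul_gen endo_pinv) by [].
  split=> [|c u v|u v]; rewrite !memS ?rmorph1 ?rpred1 // => Su Sv.
    by rewrite raddfD /= lmulZ rpredD ?rpredM // (hull_gen _ _ (inr c)).
  by rewrite rmorphM rpredM.
apply: (gen_xy S_subalg).
  exact: (hull_gen _ _ (inl true)).
exact: (hull_gen _ _ (inl false)).
Qed.

Definition hull_lmul (a : A) : hull := Sub (lmul a) (lmul_in_hull a).

Lemma hull_lmul_is_zmod_morphism : zmod_morphism hull_lmul.
Proof. by move=> a b; apply: val_inj; rewrite /= raddfB. Qed.

Lemma hull_lmul_is_monoid_morphism : monoid_morphism hull_lmul.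
Proof. by split=> [|a b]; apply: val_inj; rewrite /= ?rmorph1 ?rmorphM. Qed.

HB.instance Definition _ := GRing.isZmodMorphism.Build A hull hull_lmul
  hull_lmul_is_zmod_morphism.
HB.instance Definition _ := GRing.isMonoidMorphism.Build A hull hull_lmul
  hull_lmul_is_monoid_morphism.

Lemma hull_lmul_inj : injective hull_lmul.
Proof. by move=> a b /(congr1 val) /lmul_inj. Qed.

Lemma hull_countable : countable_type F -> countable_type hull.
Proof.
move=> [code code_inj]; apply: vnr_hull_countable.
exists (fun g => pickle (match g with inl b => inl b | inr c => inr (code c) end)).
by move=> [b|c] [b'|c'] /(pcan_inj pickleK_inv) // [] => [->|/code_inj ->].
Qed.

End HullEmbedding.

Theorem mainTheorem9 (F : fieldType) (A : algType F) (x y : A) :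
  Q_or_Zp F ->
  prime_ring A ->
  generated_by2 x y ->
  principally_nilpotent x ->
  principally_nilpotent y ->
  minimal_non_nilpotent (x + y) ->
  same_set (sum_right_ideal x y) (@jacobson A) ->
  is_max_right_ideal (sum_right_ideal x y) ->
  (forall M : A -> Prop, is_max_right_ideal M -> same_set M (sum_right_ideal x y)) ->
  is_max_left_ideal (sum_right_ideal x y) ->
  (forall M : A -> Prop, is_max_left_ideal M -> same_set M (sum_right_ideal x y)) ->
  exists (R : nzRingType) (f : {rmorphism A -> R}),
    [/\ countable_type R, prime_ring R, vnr R, injective f &
        forall J : R -> Prop, is_ideal J -> nonzero_set J ->
          exists a : A, a != 0 /\ J (f a)].
Proof.
move=> F_QZp A_prime gen_xy _ _ _ _ _ _ _ _.
apply: (@essential_extension _ _ (hull_lmul gen_xy)) => //.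
- exact: hull_lmul_inj.
- exact/hull_countable/Q_or_Zp_countable.
- exact/vnr_hull_vnr/endo_pinvP.
Qed.
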